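(* There exists a family of streaming stochastic multi-armed bandit instances such that for any parameters $T$ and $K$ with $T\geq K$, every single-pass streaming algorithm with a memory of $\frac{K}{20}$ arms suffers total expected regret \[\mathbb{E}[R_T]\geq C\cdot K^{1/3}\cdot T^{2/3}\] for some (absolute) constant $C>0$. Furthermore, the lower bound holds even when the order of arrival of the arms is uniformly at random.
   Context: Single-pass streaming multi-armed bandits: there are $K$ arms, each with an unknown reward distribution (supported on $[0,1]$) with mean $\mu_i$; $\mu^*=\max_i\mu_i$. The arms arrive one by one in a stream (in an adversarially chosen order unless stated otherwise). The algorithm may only pull arms currently stored in its memory (including the arm currently being read); once an arm is not stored or is discarded from memory, it can never be retrieved again. A memory of $m$ arms means at most $m$ arms are stored at any time. The algorithm performs a total of $T$ arm pulls (trials). If $a_1,\dots,a_T$ are the arms pulled, the regret is $R_T=T\mu^*-\sum_{s=1}^T\mu_{a_s}$, and the expected regret is its expectation over the randomness of the rewards, the algorithm, and the instance. *)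

From HB Require Import structures.
From mathcomp Require Import all_boot all_order all_algebra all_fingroup.
From mathcomp Require Import reals exp Rstruct.
Set Implicit Arguments. Unset Strict Implicit. Unset Printing Implicit Defensive.
Import Order.TTheory GRing.Theory Num.Theory.
Local Open Scope ring_scope.

Notation R := Rdefinitions.R.

(* Reward distributions: finitely supported laws on [0,1], given as a  *)
(* list of (probability, reward value) pairs.                          *)
Definition rdist := seq (R * R).

Definition is_rdist (d : rdist) : Prop :=
  (forall pv, pv \in d -> 0 <= pv.1 /\ 0 <= pv.2 <= 1) /\
  \sum_(pv <- d) pv.1 = 1.

Definition rmean (d : rdist) : R := \sum_(pv <- d) pv.1 * pv.2.

Definition instance (K : nat) := {ffun 'I_K -> rdist}.

Definition is_instance (K : nat) (nu : instance K) : Prop :=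
  forall i, is_rdist (nu i).

(* mu^* = max_i mu_i (means are >= 0, so 0 is a neutral start). *)
Definition best_mean (K : nat) (nu : instance K) : R :=
  \big[Num.max/0]_(i < K) rmean (nu i).

(* A (finitely supported) random instance: list of (weight, instance). *)
Notation instance_dist K := (seq (R * instance K)).

Definition is_instance_dist (K : nat) (D : instance_dist K) : Prop :=
  (forall wn, wn \in D -> 0 <= wn.1 /\ is_instance wn.2) /\
  \sum_(wn <- D) wn.1 = 1.

(* Streaming protocol.  Arms are identified by their arrival position  *)
(* in the stream ('I_K).  Before each pull the algorithm makes a        *)
(* decision (p, A, j):                                                  *)
(*   p : number of arms read from the stream so far (p-1 = arm being    *)
(*       currently read),                                               *)
(*   A : the set of arms available (stored arms together with the arm   *)
(*       currently read),                                               *)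
(*   j : the arm pulled in this round, j \in A.                         *)
(* Reading several arms between two pulls is a single decision (no      *)
(* information arrives in between).                                     *)
Definition decision (K : nat) := ('I_K.+1 * {set 'I_K} * 'I_K)%type.
Definition dpos (K : nat) (d : decision K) : nat := d.1.1.
Definition dmem (K : nat) (d : decision K) : {set 'I_K} := d.1.2.
Definition dpull (K : nat) (d : decision K) : 'I_K := d.2.

(* Legal transition from state (p0, A0) with memory m:                  *)
(*  - new available arms are old available ones or newly read ones      *)
(*    (a discarded arm can never come back);                            *)
(*  - the currently read arm p-1 is available, and besides it at most   *)
(*    m arms are stored;                                                *)
Definition valid_step (K m : nat) (p0 : nat) (A0 : {set 'I_K})
    (d : decision K) : bool :=
  let p := dpos d in let A := dmem d in
  [&& (p0 <= p)%N, (0 < p)%N,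
      [forall x : 'I_K, (x \in A) ==>
          ((x \in A0) || ((p0 <= x)%N && (x < p)%N))],
      [exists x in A, (x : nat).+1 == p],
      (#|A| <= m.+1)%N &
      dpull d \in A].

(* Histories: decisions together with observed rewards, oldest first. *)
Definition history (K : nat) := seq (decision K * R).

Fixpoint valid_hist_from (K m : nat) (p0 : nat) (A0 : {set 'I_K})
    (h : history K) : bool :=
  match h with
  | [::] => true
  | (d, _) :: h' => valid_step m p0 A0 d && valid_hist_from m (dpos d) (dmem d) h'
  end.

Definition valid_hist (K m : nat) (h : history K) : bool :=
  valid_hist_from m 0 set0 h.

Definition state_after (K : nat) (h : history K) : nat * {set 'I_K} :=
  match rev h with
  | [::] => (0%N, set0)
  | (d, _) :: _ => (dpos d, dmem d)
  end.

(* A (randomized) algorithm, as a behavioural strategy: given the full  *)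
(* history, a probability distribution on the next decision.            *)
Definition policy (K : nat) := history K -> decision K -> R.

Definition streaming_alg (K m : nat) (pol : policy K) : Prop :=
  (forall h d, 0 <= pol h d) /\
  (forall h, \sum_(d : decision K) pol h d = 1) /\
  (forall h d, valid_hist m h -> 0 < pol h d ->
     valid_step m (state_after h).1 (state_after h).2 d).

(* Expected regret over the next n pulls, from history h, when the arm  *)
(* at stream position i has reward law nu i, and mu^* = mus.            *)
Fixpoint exp_regret_from (K : nat) (pol : policy K) (nu : 'I_K -> rdist)
    (mus : R) (n : nat) (h : history K) : R :=
  match n with
  | 0%N => 0
  | n'.+1 =>
      \sum_(d : decision K) pol h d *
        ((mus - rmean (nu (dpull d))) +
         \sum_(pv <- nu (dpull d)) pv.1 *
             exp_regret_from pol nu mus n' (rcons h (d, pv.2)))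
  end.

(* E[R_T] for instance nu whose arms arrive in order s                  *)
(* (position i carries arm s i).                                        *)
Definition exp_regret_order (K : nat) (pol : policy K) (nu : instance K)
    (s : {perm 'I_K}) (T : nat) : R :=
  exp_regret_from pol (fun i => nu (s i)) (best_mean nu) T [::].

Definition regret_fixed_order (K : nat) (pol : policy K) (D : instance_dist K)
    (s : {perm 'I_K}) (T : nat) : R :=
  \sum_(wn <- D) wn.1 * exp_regret_order pol wn.2 s T.

Definition regret_random_order (K : nat) (pol : policy K) (D : instance_dist K)
    (T : nat) : R :=
  \sum_(wn <- D) wn.1 *
    (#|{perm 'I_K}|%:R^-1 * \sum_(s : {perm 'I_K}) exp_regret_order pol wn.2 s T).

From HB Require Import structures.
From mathcomp Require Import all_boot all_order all_algebra all_fingroup.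
From mathcomp Require Import reals exp Rstruct.
From mathcomp Require Import sequences exp ring lra zify.
Set Implicit Arguments. Unset Strict Implicit. Unset Printing Implicit Defensive.
Import Order.TTheory GRing.Theory Num.Theory.
Local Open Scope ring_scope.

(* Yao's principle, with this hard distribution: with probability 1/2 a uniformly
   random arm j has mean 1/2 + eps and all others have mean 1/2; with probability
   1/2 a uniformly random arm k always pays 1 and all others have mean 1/2.
   Compare everything with the instance where all means are 1/2, and let sigma be
   the expected number of pulls made before the (H = K/2)-th arm of the stream has
   been read.  In the second family the pulls made before arm k arrives cost 1/2
   each, so summed over k the regret is at least (K - H) sigma / 2.  In the first
   family, a memory of K/20 arms lets at most K/20 + 1 of the first H arms survive
   past position H, and at most sigma/L of them are pulled L times early; so most
   of the first H arms are discarded after fewer than L pulls.  A change of measure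
   (each pull of the bumped arm lowers the expected log-likelihood ratio by at most
   3 eps^2) shows that this stays likely when the discarded arm is the good one,
   and then almost every round loses eps.  With L = z^2, eps = 1/(8z), T = K z^3
   both families cost order K z^2 = K^(1/3) T^(2/3).  The distribution is
   invariant under relabelling the arms, so the arrival order is irrelevant. *)

Definition bern (p : R) : rdist := [:: (p, 1); (1 - p, 0)].

Lemma big_bern p (F : R -> R) :
  \sum_(pv <- bern p) pv.1 * F pv.2 = p * F 1 + (1 - p) * F 0.
Proof. by rewrite !big_cons big_nil /= addr0. Qed.

Lemma rmean_bern p : rmean (bern p) = p.
Proof. by rewrite /rmean (big_bern p id); ring. Qed.

Lemma is_rdist_bern p : 0 <= p <= 1 -> is_rdist (bern p).
Proof.
move=> /andP [p0 p1]; split; last by rewrite !big_cons big_nil /=; ring.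
by move=> pv; rewrite !inE => /orP [] /eqP -> /=; split; lra.
Qed.

Section HistoryExpectation.
Variables (K : nat) (pol : policy K) (th : 'I_K -> R).
Implicit Types (h e : history K) (f g : history K -> R).

Fixpoint expect_hist f n h : R :=
  match n with
  | 0 => f h
  | n'.+1 => \sum_(d : decision K) pol h d *
       (th (dpull d) * expect_hist f n' (rcons h (d, 1)) +
        (1 - th (dpull d)) * expect_hist f n' (rcons h (d, 0)))
  end.

Lemma expect_hist_ext f g n h : f =1 g -> expect_hist f n h = expect_hist g n h.
Proof.
move=> fg; elim: n h => [|n IH] h /=; first exact: fg.
by apply: eq_bigr => d _; rewrite !IH.
Qed.

Lemma expect_histD f g n h :
  expect_hist (fun h' => f h' + g h') n h = expect_hist f n h + expect_hist g n h.
Proof.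
elim: n h => [|n IH] h //=.
rewrite -big_split /=; apply: eq_bigr => d _; rewrite !IH; ring.
Qed.

Lemma expect_histZ c f n h :
  expect_hist (fun h' => c * f h') n h = c * expect_hist f n h.
Proof.
elim: n h => [|n IH] h //=.
rewrite mulr_sumr; apply: eq_bigr => d _; rewrite !IH; ring.
Qed.

Lemma expect_hist_sum (I : finType) (P : pred I) (F : I -> history K -> R) n h :
  expect_hist (fun h' => \sum_(i | P i) F i h') n h =
  \sum_(i | P i) expect_hist (F i) n h.
Proof.
elim: n h => [|n IH] h //; rewrite [LHS]/=.
under eq_bigr => d _ do rewrite !IH.
rewrite exchange_big /=; apply: eq_bigr => d _.
by rewrite !mulr_sumr -big_split /= mulr_sumr.
Qed.

Lemma expect_hist_eq0 f n h :
  (forall e, size e = n -> f (h ++ e) = 0) -> expect_hist f n h = 0.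
Proof.
elim: n h => [|n IH] h hf /=; first by rewrite -[h]cats0 hf.
apply: big1 => d _.
by rewrite !IH ?(mulr0, addr0) // => e se; rewrite cat_rcons hf //= se.
Qed.

Hypothesis pol_ge0 : forall h d, 0 <= pol h d.

Lemma expect_hist_eq_on (Inv : history K -> Prop) f g n h :
  (forall h d r, Inv h -> 0 < pol h d -> Inv (rcons h (d, r))) -> Inv h ->
  (forall e, size e = n -> Inv (h ++ e) -> f (h ++ e) = g (h ++ e)) ->
  expect_hist f n h = expect_hist g n h.
Proof.
move=> Inv_rcons; elim: n h => [|n IH] h Ih fg /=.
  by have := fg [::] erefl; rewrite cats0; apply.
apply: eq_bigr => d _.
have := pol_ge0 h d; rewrite le_eqVlt => /orP [/eqP <-|pos]; first by rewrite !mul0r.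
have IHr r : expect_hist f n (rcons h (d, r)) = expect_hist g n (rcons h (d, r)).
  apply: IH; first exact: Inv_rcons.
  by move=> e se; rewrite cat_rcons; apply: fg; rewrite /= se.
by rewrite !IHr.
Qed.

Hypothesis pol_sum1 : forall h, \sum_(d : decision K) pol h d = 1.

Lemma expect_hist_cst c n h : expect_hist (fun=> c) n h = c.
Proof.
elim: n h => [|n IH] h //=.
under eq_bigr => d _ do rewrite !IH.
transitivity (\sum_d pol h d * c); last by rewrite -mulr_suml pol_sum1 mul1r.
by apply: eq_bigr => d _; ring.
Qed.

Lemma expect_hist_cstB c f n h :
  expect_hist (fun h' => c - f h') n h = c - expect_hist f n h.
Proof.
rewrite (@expect_hist_ext _ (fun h' => c + (-1) * f h')) => [|h'].
  by rewrite expect_histD expect_histZ expect_hist_cst mulN1r.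
by rewrite mulN1r.
Qed.

Hypothesis th01 : forall i, 0 <= th i <= 1.

Lemma expect_hist_le_on (Inv : history K -> Prop) f g n h :
  (forall h d r, Inv h -> 0 < pol h d -> Inv (rcons h (d, r))) -> Inv h ->
  (forall e, size e = n -> Inv (h ++ e) -> f (h ++ e) <= g (h ++ e)) ->
  expect_hist f n h <= expect_hist g n h.
Proof.
move=> Inv_rcons; elim: n h => [|n IH] h Ih fg /=.
  by have := fg [::] erefl; rewrite cats0; apply.
apply: ler_sum => d _.
have := pol_ge0 h d; rewrite le_eqVlt => /orP [/eqP <-|pos]; first by rewrite !mul0r.
have [t0 t1] := andP (th01 (dpull d)).
have IHr r : expect_hist f n (rcons h (d, r)) <= expect_hist g n (rcons h (d, r)).
  apply: IH; first exact: Inv_rcons.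
  by move=> e se; rewrite cat_rcons; apply: fg; rewrite /= se.
by rewrite ler_wpM2l // lerD // ler_wpM2l // subr_ge0.
Qed.

Lemma expect_hist_le f g n h :
  (forall h', f h' <= g h') -> expect_hist f n h <= expect_hist g n h.
Proof. by move=> fg; apply: (@expect_hist_le_on (fun=> True)). Qed.


Lemma expect_hist_ge0 f n h : (forall h', 0 <= f h') -> 0 <= expect_hist f n h.
Proof. by move=> f0; rewrite -(@expect_hist_eq0 (fun=> 0) n h) //; apply: expect_hist_le. Qed.

Lemma regret_expect_hist mus n h :
  exp_regret_from pol (fun i => bern (th i)) mus n h +
    \sum_(x <- h) (mus - th (dpull x.1)) =
  expect_hist (fun h' => \sum_(x <- h') (mus - th (dpull x.1))) n h.
Proof.
elim: n h => [|n IH] h /=; first by rewrite add0r.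
have -> : \sum_(x <- h) (mus - th (dpull x.1)) =
           \sum_d pol h d * \sum_(x <- h) (mus - th (dpull x.1)).
  by rewrite -mulr_suml pol_sum1 mul1r.
rewrite -big_split /=.
apply: eq_bigr => d _.
rewrite rmean_bern (big_bern _ (fun r => exp_regret_from _ _ _ _ (rcons h (d, r)))).
by rewrite -!IH !big_rcons /=; ring.
Qed.

Lemma exp_regret_bern mus n :
  exp_regret_from pol (fun i => bern (th i)) mus n [::] =
  expect_hist (fun h => \sum_(x <- h) (mus - th (dpull x.1))) n [::].
Proof. by rewrite -regret_expect_hist big_nil addr0. Qed.

End HistoryExpectation.

Section ValidHistories.
Variables K m : nat.
Implicit Types (h e : history K).

Definition last_state p0 (A0 : {set 'I_K}) h : nat * {set 'I_K} :=
  foldl (fun _ (x : decision K * R) => (dpos x.1, dmem x.1)) (p0, A0) h.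

Lemma state_afterE h : state_after h = last_state 0 set0 h.
Proof.
case/lastP: h => [|h x] //.
by rewrite /state_after rev_rcons /last_state foldl_rcons; case: x.
Qed.

Lemma last_state_rcons p0 (A0 : {set 'I_K}) h d r :
  last_state p0 A0 (rcons h (d, r)) = (dpos d, dmem d).
Proof. by rewrite /last_state foldl_rcons. Qed.

Lemma valid_hist_from_cat p0 (A0 : {set 'I_K}) h e :
  valid_hist_from m p0 A0 (h ++ e) =
  valid_hist_from m p0 A0 h &&
  valid_hist_from m (last_state p0 A0 h).1 (last_state p0 A0 h).2 e.
Proof. by elim: h p0 A0 => [|[d r] h IH] p0 A0 //=; rewrite IH andbA. Qed.

Lemma valid_hist_rcons pol h d r :
  streaming_alg m pol -> valid_hist m h -> 0 < pol h d ->
  valid_hist m (rcons h (d, r)).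
Proof.
move=> [_ [_ pol_valid]] vh pos.
rewrite /valid_hist -cats1 valid_hist_from_cat; apply/andP; split=> //=.
by rewrite andbT -state_afterE; apply: pol_valid.
Qed.

Lemma valid_hist_from_inv p0 (A0 : {set 'I_K}) h :
  valid_hist_from m p0 A0 h -> (forall y, y \in A0 -> (y < p0)%N) ->
  forall x, x \in h ->
    [/\ forall y, y \in dmem x.1 -> (y < dpos x.1)%N,
        dpull x.1 \in dmem x.1 & (p0 <= dpos x.1)%N].
Proof.
elim: h p0 A0 => [|[d r] h IH] p0 A0 //= /andP [vs vh] A0_lt x.
case/and5P: vs => le_p0 _ mem_new _ /andP [_ pull_mem].
have mem_lt y : y \in dmem d -> (y < dpos d)%N.
  move=> yA; have := forallP mem_new y; rewrite yA /=.
  by case/orP => [/A0_lt/leq_trans->|/andP [_ ->]].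
rewrite inE => /orP [/eqP -> //|xh].
have [? ? le_x] := IH _ _ vh mem_lt x xh; split=> //.
exact: leq_trans le_x.
Qed.

Lemma valid_hist_mem_lt h x : valid_hist m h -> x \in h ->
  forall y, y \in dmem x.1 -> (y < dpos x.1)%N.
Proof. by move=> vh xh; case: (valid_hist_from_inv vh _ xh) => // y; rewrite inE. Qed.

Lemma valid_hist_pull_mem h x : valid_hist m h -> x \in h -> dpull x.1 \in dmem x.1.
Proof. by move=> vh xh; case: (valid_hist_from_inv vh _ xh) => // y; rewrite inE. Qed.

Lemma valid_hist_pull_lt h x : valid_hist m h -> x \in h -> (dpull x.1 < dpos x.1)%N.
Proof. by move=> vh xh; apply/(valid_hist_mem_lt vh xh)/(valid_hist_pull_mem vh xh). Qed.

End ValidHistories.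

Section Counting.
Variable K : nat.
Implicit Types (h e : history K) (P : pred (decision K)).

Definition nrounds P h : R := \sum_(x <- h) (if P x.1 then 1 else 0).

Lemma nrounds_ge0 P h : 0 <= nrounds P h.
Proof. by apply: sumr_ge0 => x _; case: ifP. Qed.

Lemma nrounds_cat P h e : nrounds P (h ++ e) = nrounds P h + nrounds P e.
Proof. by rewrite /nrounds big_cat. Qed.

Lemma nrounds_rcons P h d r :
  nrounds P (rcons h (d, r)) = nrounds P h + (if P d then 1 else 0).
Proof. by rewrite /nrounds big_rcons. Qed.

Lemma nrounds_le_size P h : nrounds P h <= (size h)%:R.
Proof.
elim: h => [|x h IH]; first by rewrite /nrounds big_nil.
by rewrite /nrounds big_cons -/(nrounds P h) /= -natr1; case: ifP => _; lra.
Qed.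

Definition npulls (j : 'I_K) h := nrounds (fun d => dpull d == j) h.

Definition nbefore (k : nat) h := nrounds (fun d => (dpos d <= k)%N) h.

Lemma sum_indicator_leq (a n : nat) :
  \sum_(k < n) (if (a <= k)%N then 1 else 0 : R) = (n - a)%:R.
Proof.
elim: n => [|n IH]; first by rewrite big_ord0 sub0n.
rewrite big_ord_recr /= IH; case: (leqP a n) => an.
  by rewrite (subSn an) -natr1.
by rewrite addr0; congr _%:R; lia.
Qed.

Lemma sum_nbefore_ge H h : (H <= K)%N ->
  (K - H)%:R * nbefore H h <= \sum_(k < K) nbefore k h.
Proof.
move=> HK; rewrite /nbefore /nrounds exchange_big /= mulr_sumr.
apply: ler_sum => x _; case: ifP => xH; last first.
  by rewrite mulr0; apply: sumr_ge0 => k _; case: ifP.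
rewrite mulr1 -sum_indicator_leq; apply: ler_sum => k _.
case: (leqP H k) => Hk; first by rewrite (leq_trans xH Hk).
by case: ifP.
Qed.

End Counting.

Section Survivors.
Variables K m H : nat.
Implicit Types (h e : history K).

Definition kept_late (j : 'I_K) h :=
  has (fun x : decision K * R => (H < dpos x.1)%N && (j \in dmem x.1)) h.

Definition kept (j : 'I_K) h := kept_late j h || (j \in (state_after h).2).

Lemma kept_from_mem p0 (A0 : {set 'I_K}) h (j : 'I_K) :
  valid_hist_from m p0 A0 h -> (H < p0)%N -> (j < H)%N ->
  kept_late j h || (j \in (last_state p0 A0 h).2) -> j \in A0.
Proof.
elim: h p0 A0 => [|[d r] h IH] p0 A0 //= /andP [vs vh] Hp jH.
case/and5P: vs => le_p0 _ mem_new _ _.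
have jA0 : j \in dmem d -> j \in A0.
  move=> jA; have := forallP mem_new j; rewrite jA /= => /orP [//|/andP [pj _]].
  by have := leq_ltn_trans pj jH; rewrite ltnNge (ltnW Hp).
rewrite -orbA => /orP [/andP [_ /jA0] //|kj].
by apply/jA0/(IH _ _ vh) => //; apply: leq_trans Hp le_p0.
Qed.

(* The first decision taken after position H (or the last decision, if there is
   none) stores every arm among the first H that is still available later. *)
Lemma card_kept_from_le p0 (A0 : {set 'I_K}) h :
  valid_hist_from m p0 A0 h -> h != [::] ->
  (#|[set j : 'I_K | (j < H)%N &&
        (kept_late j h || (j \in (last_state p0 A0 h).2))]| <= m.+1)%N.
Proof.
elim: h p0 A0 => [|[d r] h IH] p0 A0 //= /andP [vs vh] _.
have card_d : (#|dmem d| <= m.+1)%N by case/and5P: vs => _ _ _ _ /andP [].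
have [Hd|] := boolP ((H < dpos d)%N || (h == [::])); last first.
  by rewrite negb_or => /andP [/negbTE-> hn]; exact: IH.
apply: leq_trans card_d; apply: subset_leq_card; apply/subsetP => j.
rewrite inE => /andP [jH].
case/orP: Hd => [Hd|/eqP hnil]; last by rewrite hnil /= orbF => /orP [/andP [_ ->]|].
rewrite Hd /= -orbA => /orP [//|kj].
exact: (kept_from_mem vh Hd jH).
Qed.

Lemma card_kept_le h : valid_hist m h -> h != [::] ->
  (#|[set j : 'I_K | (j < H)%N && kept j h]| <= m.+1)%N.
Proof. by move=> vh hn; rewrite /kept state_afterE; apply: card_kept_from_le. Qed.

Definition npulls_early (j : 'I_K) h :=
  nrounds (fun d => (dpos d <= H)%N && (dpull d == j)) h.

Lemma npulls_early_eq (j : 'I_K) h :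
  valid_hist m h -> ~~ kept_late j h -> npulls j h = npulls_early j h.
Proof.
move=> vh nk; rewrite /npulls /npulls_early /nrounds; apply: eq_big_seq => x xh.
case: (dpull x.1 =P j) => [pj|]; last by rewrite andbF.
rewrite andbT; case: leqP => // Hx.
have pull_mem := valid_hist_pull_mem vh xh.
by case/negP: nk; apply/hasP; exists x => //; rewrite Hx -pj pull_mem.
Qed.

Lemma sum_npulls_early h : \sum_(j < K) npulls_early j h = nbefore H h.
Proof.
rewrite /npulls_early /nbefore /nrounds exchange_big /=; apply: eq_bigr => x _.
case: ifP => _ /=; last by apply: big1.
rewrite (bigD1 (dpull x.1)) //= eqxx big1 ?addr0 // => j /negbTE.
by rewrite eq_sym => ->.
Qed.

Definition unexplored (L : R) (j : 'I_K) h : R :=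
  if ~~ kept j h && (npulls_early j h < L) && (npulls j h < L) then 1 else 0.

Lemma unexplored01 (L : R) (j : 'I_K) h :
  unexplored L j h = 0 \/ unexplored L j h = 1.
Proof. by rewrite /unexplored; case: ifP; [right|left]. Qed.

Lemma unexplored_npulls_lt (L : R) (j : 'I_K) h :
  unexplored L j h != 0 -> npulls j h < L.
Proof. by rewrite /unexplored; case: ifP => [/andP [_ ->]|_] //; rewrite eqxx. Qed.

Lemma sum_explored_le (L : R) h : 0 < L -> valid_hist m h -> h != [::] ->
  \sum_(j < K | (j < H)%N) (1 - unexplored L j h) <= m.+1%:R + nbefore H h / L.
Proof.
move=> L0 vh hn.
apply: (@le_trans _ _ (\sum_(j < K | (j < H)%N)
   ((if kept j h then 1 else 0) + npulls_early j h / L))).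
  apply: ler_sum => j _; rewrite /unexplored.
  have N0 : 0 <= npulls_early j h / L by rewrite divr_ge0 ?nrounds_ge0 ?ltW.
  case: (boolP (kept j h)) => kj /=; first by rewrite subr0 lerDl.
  rewrite add0r; case: (ltP (npulls_early j h) L) => nL /=; last first.
    by rewrite subr0 ler_pdivlMr // mul1r.
  move: kj; rewrite /kept negb_or => /andP [nk _].
  by rewrite npulls_early_eq // nL subrr.
rewrite big_split /=; apply: lerD.
  rewrite -big_mkcondr /= sumr_const.
  by rewrite -cardsE ler_nat; apply: card_kept_le.
rewrite -mulr_suml; apply: ler_wpM2r; first by rewrite invr_ge0 ltW.
rewrite -sum_npulls_early [X in _ <= X](bigID (fun j : 'I_K => (j < H)%N)) /=.
by rewrite lerDl sumr_ge0 // => j _; apply: nrounds_ge0.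
Qed.

End Survivors.

Definition th_half {K : nat} (i : 'I_K) : R := 1 / 2.

Definition th_bump (K : nat) (j : 'I_K) (eps : R) : 'I_K -> R :=
  fun i => if i == j then 1 / 2 + eps else 1 / 2.

Lemma th_half01 K (i : 'I_K) : 0 <= th_half i <= 1.
Proof. by apply/andP; split; rewrite /th_half; lra. Qed.

Lemma expR_half_le2 : expR (1 / 2 : R) <= 2.
Proof.
have := expR_ge1Dx (- (1 / 2 : R)); have := expRxMexpNx_1 (1 / 2 : R).
have := expR_gt0 (- (1 / 2 : R)); have := expR_gt0 (1 / 2 : R).
nra.
Qed.

Lemma ln_sym_ge (eps : R) : 0 < eps <= 1 / 8 ->
  - 6 * eps ^+ 2 <= ln (1 + 2 * eps) + ln (1 - 2 * eps).
Proof.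
move=> /andP [e0 e1].
rewrite -lnM ?posrE; [|lra|lra].
set y := (1 + 2 * eps) * (1 - 2 * eps).
have y0 : 0 < y by rewrite /y mulr_gt0 //; lra.
have hy : y = 1 - 4 * eps ^+ 2 by rewrite /y; ring.
have ln_inv : ln (1 + (y^-1 - 1)) <= y^-1 - 1.
  apply: le_ln1Dx; suff : 0 < y^-1 by lra.
  by rewrite invr_gt0.
rewrite addrC subrK lnV ?posrE // in ln_inv.
have inv_le : y^-1 <= 1 + 6 * eps ^+ 2.
  rewrite -(ler_pM2l y0) mulfV ?gt_eqF // hy.
  have : 0 <= eps ^+ 2 <= 1 / 64 by apply/andP; split; [exact: sqr_ge0 | rewrite expr2; nra].
  nra.
lra.
Qed.

Section ChangeOfMeasure.
Variables (K : nat) (j : 'I_K) (eps : R).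
Hypothesis eps_bound : 0 < eps < 1 / 2.
Implicit Types (pol : policy K) (h e : history K) (f : history K -> R).

Lemma th_bump01 i : 0 <= th_bump j eps i <= 1.
Proof.
case/andP: eps_bound => ? ?.
by rewrite /th_bump; case: ifP => _; apply/andP; split; lra.
Qed.

Definition llr_step (x : decision K * R) : R :=
  if dpull x.1 == j then (if x.2 == 1 then ln (1 + 2 * eps) else ln (1 - 2 * eps))
  else 0.

Definition llr h := \sum_(x <- h) llr_step x.

Lemma llr_rcons h x : llr (rcons h x) = llr h + llr_step x.
Proof. by rewrite /llr big_rcons. Qed.

Lemma expect_hist_llr pol f n h :
  expR (llr h) * expect_hist pol (th_bump j eps) f n h =
  expect_hist pol th_half (fun h' => f h' * expR (llr h')) n h.
Proof.
case/andP: eps_bound => e0 e1.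
have p1 : 0 < 1 + 2 * eps by lra.
have p2 : 0 < 1 - 2 * eps by lra.
elim: n h => [|n IH] h /=; first by rewrite mulrC.
rewrite mulr_sumr; apply: eq_bigr => d _.
rewrite -!IH !llr_rcons !expRD /llr_step /= /th_bump /th_half.
have n01 : ((0 : R) == 1) = false by rewrite eq_sym oner_eq0.
case: (dpull d == j); rewrite ?eqxx ?n01 ?expR0; last by field.
by rewrite !lnK ?posrE //; field.
Qed.

Lemma expect_hist_bump_ge pol (F : history K -> R) n :
  (forall h d, 0 <= pol h d) -> (forall h, \sum_(d : decision K) pol h d = 1) ->
  (forall h, F h = 0 \/ F h = 1) ->
  1 / 2 * expect_hist pol th_half F n [::] +
    expect_hist pol th_half llr n [::] <=
  expect_hist pol (th_bump j eps) F n [::].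
Proof.
move=> p0 ps F01.
have llr0 : llr [::] = 0 by rewrite /llr big_nil.
have change f : expect_hist pol (th_bump j eps) f n [::] =
    expect_hist pol th_half (fun h => f h * expR (llr h)) n [::].
  by rewrite -expect_hist_llr llr0 expR0 mul1r.
have total : expect_hist pol th_half (fun h => expR (llr h)) n [::] = 1.
  have := change (fun=> 1); rewrite expect_hist_cst // => ->.
  by apply: expect_hist_ext => h; rewrite mul1r.
set c := expR (1 / 2 : R) - 1.
have c0 : 0 <= c by have := expR_ge1Dx (1 / 2 : R); rewrite /c; lra.
have c1 : c <= 1 by have := expR_half_le2; rewrite /c; lra.
have bump_ge0 : 0 <= expect_hist pol (th_bump j eps) F n [::].
  apply: expect_hist_ge0 => //; first exact: th_bump01.
  by move=> h; case: (F01 h) => ->.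
(* for F h = 1 this is 1/2 + l + 1 <= exp (l + 1/2) *)
have pointwise : expect_hist pol th_half (fun h => 1 / 2 * F h + llr h + 1) n [::] <=
    expect_hist pol th_half (fun h => c * (F h * expR (llr h)) + expR (llr h)) n [::].
  apply: expect_hist_le => // [i|h]; first exact: th_half01.
  have := expR_ge1Dx (llr h); have := expR_ge1Dx (llr h + 1 / 2).
  rewrite expRD /c; case: (F01 h) => ->; nra.
rewrite !expect_histD !expect_histZ -change total expect_hist_cst // in pointwise.
nra.
Qed.

Definition stop_policy pol (L : R) (d0 : decision K) : policy K :=
  fun h d => if npulls j h < L then pol h d else (d == d0)%:R.

Lemma stop_policy_ge0 pol L d0 : (forall h d, 0 <= pol h d) ->
  forall h d, 0 <= stop_policy pol L d0 h d.
Proof. by move=> p0 h d; rewrite /stop_policy; case: ifP. Qed.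

Lemma stop_policy_sum1 pol L d0 : (forall h, \sum_(d : decision K) pol h d = 1) ->
  forall h, \sum_(d : decision K) stop_policy pol L d0 h d = 1.
Proof.
move=> ps h; rewrite /stop_policy; case: (npulls j h < L) => /=; first exact: ps.
rewrite (bigD1 d0) //= eqxx big1 ?addr0 // => d.
by move/negbTE->.
Qed.

Lemma expect_hist_stop pol th L d0 f n h :
  (forall h', f h' != 0 -> npulls j h' < L) ->
  expect_hist pol th f n h = expect_hist (stop_policy pol L d0) th f n h.
Proof.
move=> f_stop; elim: n h => [|n IH] h //.
case: (ltP (npulls j h) L) => hL.
  by rewrite /=; apply: eq_bigr => d _; rewrite /stop_policy hL !IH.
have f0 e : size e = n.+1 -> f (h ++ e) = 0.
  move=> _; apply/eqP; apply: contraT => /f_stop.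
  move: hL; rewrite /npulls nrounds_cat.
  by have := nrounds_ge0 (fun d => dpull d == j) e; lra.
by rewrite !expect_hist_eq0.
Qed.

(* Each pull of j moves the expected llr by (ln (1 + 2 eps) + ln (1 - 2 eps)) / 2,
   and the stopped policy pulls j at most L + 1 times. *)
Lemma llr_stop_ge pol L d0 n h :
  dpull d0 != j ->
  (forall h d, 0 <= pol h d) -> (forall h, \sum_(d : decision K) pol h d = 1) ->
  eps <= 1 / 8 -> npulls j h < L + 1 ->
  llr h - 3 * eps ^+ 2 * (L + 1 - npulls j h) <=
  expect_hist (stop_policy pol L d0) th_half llr n h.
Proof.
move=> d0j p0 ps e8; case/andP: eps_bound => e0 e1.
have ln_ge := @ln_sym_ge eps ltac:(by apply/andP).
have ps' := stop_policy_sum1 L d0 ps; have p0' := stop_policy_ge0 L d0 p0.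
elim: n h => [|n IH] h hN /=.
  suff : 0 <= 3 * eps ^+ 2 * (L + 1 - npulls j h) by lra.
  by rewrite !mulr_ge0 ?sqr_ge0 //; lra.
set c := llr h - _.
apply: (@le_trans _ _ (\sum_(d : decision K) stop_policy pol L d0 h d * c)).
  by rewrite -mulr_suml ps' mul1r.
apply: ler_sum => d _.
have := p0' h d; rewrite le_eqVlt => /orP [/eqP <-|pos]; first by rewrite !mul0r.
apply: ler_wpM2l; first exact: ltW.
have npulls_rcons r :
    npulls j (rcons h (d, r)) = npulls j h + (if dpull d == j then 1 else 0).
  exact: nrounds_rcons.
have n01 : ((0 : R) == 1) = false by rewrite eq_sym oner_eq0.
have IH1 := IH (rcons h (d, 1)); have IH0 := IH (rcons h (d, 0)).
rewrite !npulls_rcons !llr_rcons /llr_step /= eqxx n01 in IH1 IH0.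
move: IH1 IH0; rewrite /th_half /c; case: (boolP (dpull d == j)) => dj /= IH1 IH0.
  have hl : npulls j h < L.
    move: pos; rewrite /stop_policy; case: (ltP (npulls j h) L) => // _.
    case: (d =P d0) => [ed|]; last by rewrite ltr0n.
    by move: d0j; rewrite -ed dj.
  by move: (IH1 ltac:(lra)) (IH0 ltac:(lra)) ln_ge; nra.
rewrite !addr0 in IH1 IH0.
by move: (IH1 ltac:(lra)) (IH0 ltac:(lra)); nra.
Qed.

Lemma prob_bump_ge pol (F : history K -> R) (L : R) d0 n :
  dpull d0 != j -> eps <= 1 / 8 -> 0 <= L ->
  (forall h d, 0 <= pol h d) -> (forall h, \sum_(d : decision K) pol h d = 1) ->
  (forall h, F h = 0 \/ F h = 1) -> (forall h, F h != 0 -> npulls j h < L) ->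
  1 / 2 * expect_hist pol th_half F n [::] - 3 * eps ^+ 2 * (L + 1) <=
  expect_hist pol (th_bump j eps) F n [::].
Proof.
move=> d0j e8 L0 p0 ps F01 F_stop.
rewrite (expect_hist_stop _ _ d0 _ _ F_stop) [X in _ <= X](expect_hist_stop _ _ d0 _ _ F_stop).
have := expect_hist_bump_ge n (stop_policy_ge0 L d0 p0) (stop_policy_sum1 L d0 ps) F01.
have := @llr_stop_ge pol L d0 n [::] d0j p0 ps e8.
rewrite /npulls /nrounds /llr !big_nil; lra.
Qed.

End ChangeOfMeasure.

Lemma streaming_alg_ge0 K m (pol : policy K) :
  streaming_alg m pol -> forall h d, 0 <= pol h d.
Proof. by case. Qed.

Lemma streaming_alg_sum1 K m (pol : policy K) :
  streaming_alg m pol -> forall h, \sum_(d : decision K) pol h d = 1.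
Proof. by case=> _ []. Qed.

Definition th_sure (K : nat) (k : 'I_K) : 'I_K -> R :=
  fun i => if i == k then 1 else 1 / 2.

Lemma exists_pull_neq K (j : 'I_K) : (1 < K)%N -> exists d0 : decision K, dpull d0 != j.
Proof.
move=> K1; have K0 := ltnW K1.
have [->|nj] := eqVneq j (Ordinal K0).
  by exists (ord0, set0, Ordinal K1).
by exists (ord0, set0, Ordinal K0); rewrite /dpull /= eq_sym.
Qed.

Lemma gap_bump_sum K (j : 'I_K) eps (e : history K) :
  \sum_(x <- e) (1 / 2 + eps - th_bump j eps (dpull x.1)) =
  eps * ((size e)%:R - npulls j e).
Proof.
elim: e => [|x e IH]; first by rewrite /npulls /nrounds !big_nil /= subr0 mulr0.
rewrite big_cons IH /npulls /nrounds big_cons /= -/(nrounds _ e) /th_bump.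
by case: ifP => _; rewrite -natr1; ring.
Qed.

Section RegretBounds.
Variables (K m : nat) (pol : policy K).
Hypothesis pol_alg : streaming_alg m pol.
Implicit Types (h e : history K).

Let pol_ge0 := streaming_alg_ge0 pol_alg.
Let pol_sum1 := streaming_alg_sum1 pol_alg.

Let valid_rcons h d r : valid_hist m h -> 0 < pol h d -> valid_hist m (rcons h (d, r)).
Proof. exact: valid_hist_rcons. Qed.

Lemma nbefore_cat_after k h d r e :
  valid_hist m (rcons h (d, r) ++ e) -> (k < dpos d)%N ->
  nbefore k (rcons h (d, r) ++ e) = nbefore k (rcons h (d, r)).
Proof.
move=> v kd; rewrite /nbefore nrounds_cat -[RHS]addr0; congr (_ + _).
move: v; rewrite /valid_hist valid_hist_from_cat last_state_rcons => /andP [v1 ve].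
have dr_in : (d, r) \in rcons h (d, r) by rewrite mem_rcons mem_head.
rewrite /nrounds big_seq big1 // => x xe.
have [_ _ le_x] := valid_hist_from_inv ve (valid_hist_mem_lt v1 dr_in) xe.
by rewrite leqNgt (leq_trans kd le_x).
Qed.

Lemma expect_nbefore_prefix k th th' n h :
  (forall i : 'I_K, (i < k)%N -> th i = th' i) -> valid_hist m h ->
  expect_hist pol th (nbefore k) n h = expect_hist pol th' (nbefore k) n h.
Proof.
move=> th_eq; elim: n h => [|n IH] h vh //=.
apply: eq_bigr => d _.
have := pol_ge0 h d; rewrite le_eqVlt => /orP [/eqP <-|pos]; first by rewrite !mul0r.
have vr r : valid_hist m (rcons h (d, r)) by exact: valid_rcons.
case: (leqP (dpos d) k) => dk.
  have dr_in : (d, 1) \in rcons h (d, 1) by rewrite mem_rcons mem_head.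
  have pk := leq_trans (valid_hist_pull_lt (vr 1) dr_in) dk.
  by rewrite (th_eq _ pk) !IH.
have frozen th2 r : expect_hist pol th2 (nbefore k) n (rcons h (d, r)) = nbefore k h.
  rewrite (@expect_hist_eq_on K pol th2 pol_ge0 (valid_hist m) _
             (fun=> nbefore k (rcons h (d, r)))) //.
  - by rewrite expect_hist_cst // /nbefore nrounds_rcons leqNgt dk addr0.
  - by move=> e _ ve; apply: nbefore_cat_after.
by rewrite !frozen; ring.
Qed.

(* before arm k has been read, every pull costs 1/2 in the instance [th_sure k] *)
Lemma regret_sure_ge (k : 'I_K) T :
  1 / 2 * expect_hist pol th_half (nbefore k) T [::] <=
  exp_regret_from pol (fun i => bern (th_sure k i)) 1 T [::].
Proof.
have sure01 i : 0 <= th_sure k i <= 1.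
  by rewrite /th_sure; case: ifP => _; apply/andP; split; lra.
rewrite exp_regret_bern // -(expect_nbefore_prefix (th := th_sure k)) //; last first.
  by move=> i ik; rewrite /th_sure /th_half; case: eqP => // ei; rewrite ei ltnn in ik.
rewrite -expect_histZ.
apply: (expect_hist_le_on pol_ge0 sure01 valid_rcons) => // e _ ve.
rewrite /nbefore /nrounds mulr_sumr !big_seq; apply: ler_sum => x xe.
have pull_lt := valid_hist_pull_lt ve xe.
case: (leqP (dpos x.1) k) => dk.
  have : dpull x.1 != k by rewrite neq_ltn (leq_trans pull_lt dk).
  by rewrite /th_sure => /negbTE ->; lra.
by have /andP [_ ?] := sure01 (dpull x.1); lra.
Qed.

Lemma sum_regret_sure_ge H T : (H <= K)%N ->
  (K - H)%:R / 2 * expect_hist pol th_half (nbefore H) T [::] <=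
  \sum_(k < K) exp_regret_from pol (fun i => bern (th_sure k i)) 1 T [::].
Proof.
move=> HK; apply: le_trans (ler_sum _ (fun k _ => regret_sure_ge k T)).
rewrite -mulr_sumr -expect_hist_sum.
have : (K - H)%:R * expect_hist pol th_half (nbefore H) T [::] <=
       expect_hist pol th_half (fun h => \sum_(k < K) nbefore k h) T [::].
  rewrite -expect_histZ; apply: expect_hist_le => // [i|h]; first exact: th_half01.
  exact: sum_nbefore_ge.
nra.
Qed.

Lemma sum_unexplored_ge H (L : R) T : 0 < L -> (0 < T)%N -> (H <= K)%N ->
  H%:R - m.+1%:R - expect_hist pol th_half (nbefore H) T [::] / L <=
  \sum_(j < K | (j < H)%N) expect_hist pol th_half (unexplored H L j) T [::].
Proof.
move=> L0 T0 HK.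
have explored : expect_hist pol th_half
      (fun h => \sum_(j < K | (j < H)%N) (1 - unexplored H L j h)) T [::] <=
    expect_hist pol th_half (fun h => m.+1%:R + L^-1 * nbefore H h) T [::].
  apply: (expect_hist_le_on pol_ge0 (@th_half01 K) valid_rcons) => // e se ve.
  rewrite mulrC; apply: sum_explored_le => //.
  by rewrite /= -size_eq0 se -lt0n.
have cstB j : expect_hist pol th_half (fun h => 1 - unexplored H L j h) T [::] =
    1 - expect_hist pol th_half (unexplored H L j) T [::] by apply: expect_hist_cstB.
rewrite expect_hist_sum (eq_bigr _ (fun j _ => cstB j)) in explored.
rewrite expect_histD expect_histZ expect_hist_cst // sumrB in explored.
rewrite (big_ord_narrow HK) sumr_const card_ord in explored.
rewrite mulrC; lra.
Qed.

Lemma regret_bump_ge0 (j : 'I_K) eps T : 0 < eps < 1 / 2 ->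
  0 <= exp_regret_from pol (fun i => bern (th_bump j eps i)) (1 / 2 + eps) T [::].
Proof.
move=> eps_bound; rewrite exp_regret_bern //.
apply: expect_hist_ge0 => // [|h]; first exact: th_bump01.
by apply: sumr_ge0 => x _; rewrite /th_bump; case: ifP => _; lra.
Qed.

Lemma regret_bump_ge (j : 'I_K) eps (F : history K -> R) (L : R) T :
  0 < eps < 1 / 2 -> L <= T%:R ->
  (forall h, F h = 0 \/ F h = 1) -> (forall h, F h != 0 -> npulls j h < L) ->
  eps * (T%:R - L) * expect_hist pol (th_bump j eps) F T [::] <=
  exp_regret_from pol (fun i => bern (th_bump j eps i)) (1 / 2 + eps) T [::].
Proof.
move=> eps_bound LT F01 F_stop; have [e0 _] := andP eps_bound.
rewrite exp_regret_bern // -expect_histZ.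
apply: (expect_hist_le_on pol_ge0 (th_bump01 j eps_bound) (Inv := fun=> True)) => // e se _.
rewrite /= gap_bump_sum se.
have := nrounds_le_size (fun d => dpull d == j) e; rewrite se -/(npulls j e) => le_size.
case: (F01 e) => Fe; rewrite Fe; first by nra.
by have := F_stop e; rewrite Fe => /(_ (oner_neq0 _)); nra.
Qed.

Lemma regret_bump_unexplored_ge H (j : 'I_K) eps (L : R) T :
  (1 < K)%N -> 0 < eps <= 1 / 8 -> 0 <= L <= T%:R ->
  eps * (T%:R - L) *
    (1 / 2 * expect_hist pol th_half (unexplored H L j) T [::] - 3 * eps ^+ 2 * (L + 1)) <=
  exp_regret_from pol (fun i => bern (th_bump j eps i)) (1 / 2 + eps) T [::].
Proof.
move=> K1 /andP [e0 e8] /andP [L0 LT].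
have eps_bound : 0 < eps < 1 / 2 by apply/andP; split; lra.
have [d0 d0j] := exists_pull_neq j K1.
have F01 := unexplored01 H L j; have F_stop := @unexplored_npulls_lt _ H L j.
apply: le_trans (regret_bump_ge eps_bound LT F01 F_stop).
apply: ler_wpM2l; first by rewrite mulr_ge0 //; lra.
exact: (prob_bump_ge eps_bound T d0j e8 L0 pol_ge0 pol_sum1 F01 F_stop).
Qed.

Lemma sum_regret_bump_ge H eps (L : R) T :
  (1 < K)%N -> (0 < T)%N -> (H <= K)%N -> 0 < eps <= 1 / 8 -> 0 < L <= T%:R ->
  eps * (T%:R - L) *
    ((H%:R - m.+1%:R - expect_hist pol th_half (nbefore H) T [::] / L) / 2
     - 3 * eps ^+ 2 * (L + 1) * H%:R) <=
  \sum_(j < K) exp_regret_from pol (fun i => bern (th_bump j eps i)) (1 / 2 + eps) T [::].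
Proof.
move=> K1 T0 HK eps_bound /andP [L0 LT].
have [e0 e8] := andP eps_bound.
rewrite (bigID (fun j : 'I_K => (j < H)%N)) /= -[X in X <= _]addr0.
apply: lerD; last by apply: sumr_ge0 => j _; apply: regret_bump_ge0; apply/andP; split; lra.
have LT' : 0 <= L <= T%:R by apply/andP; split; lra.
apply: le_trans (ler_sum _ (fun j _ => regret_bump_unexplored_ge H j K1 eps_bound LT')).
rewrite -mulr_sumr; apply: ler_wpM2l; first by rewrite mulr_ge0 //; lra.
rewrite sumrB -mulr_sumr [X in _ <= _ - X](big_ord_narrow HK) sumr_const card_ord -mulr_natr.
by have := sum_unexplored_ge L0 T0 HK; lra.
Qed.

End RegretBounds.

(* eps = 1/(8z), L = z^2 and T = k z^3 in the two family bounds *)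
Lemma regret_tradeoff (k h m1 z s : R) :
  20 <= k -> 2 * h <= k <= 2 * h + 1 -> 20 * (m1 - 1) <= k -> 1 <= z -> 0 <= s ->
  k ^+ 2 * z ^+ 2 / 128 <=
  1 / (8 * z) * (k * z ^+ 3 - z ^+ 2) *
    ((h - m1 - s / z ^+ 2) / 2 - 3 * (1 / (8 * z)) ^+ 2 * (z ^+ 2 + 1) * h) +
  (k - h) / 2 * s.
Proof.
move=> k20 /andP [hk kh] mk z1 s0.
have z0 : 0 < z by lra.
set eps := 1 / (8 * z); set L := z ^+ 2.
have L1 : 1 <= L by rewrite /L expr2; nra.
have epsL : eps ^+ 2 * L = 1 / 64 by rewrite /eps /L; field; rewrite gt_eqF.
have eps2 : eps ^+ 2 <= 1 / 64 by nra.
set A := eps * (k * z ^+ 3 - L).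
have AE : A = (k * L - z) / 8 by rewrite /A /eps /L; field; rewrite gt_eqF.
have A_ge : k * L / 16 <= A by rewrite AE /L; nra.
have A_le : A <= k * L / 8 by rewrite AE; lra.
set X := (h - m1) / 2 - 3 * eps ^+ 2 * (L + 1) * h.
have X_ge : k / 8 <= X.
  have : 3 * eps ^+ 2 * (L + 1) * h <= 6 / 64 * h by nra.
  rewrite /X; lra.
have -> : (h - m1 - s / L) / 2 - 3 * eps ^+ 2 * (L + 1) * h = X - s / (2 * L).
  by rewrite /X; field; rewrite gt_eqF //; lra.
have AX : k * L / 16 * (k / 8) <= A * X.
  by apply: ler_pM => //; rewrite ?divr_ge0 ?mulr_ge0 //; lra.
have As : A * (s / (2 * L)) <= k * s / 16.
  have -> : k * s / 16 = k * L / 8 * (s / (2 * L)) by field; rewrite gt_eqF //; lra.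
  by apply: ler_wpM2r => //; rewrite divr_ge0 //; lra.
have : k * z ^+ 2 / 16 * (k / 8) = k ^+ 2 * z ^+ 2 / 128 by field.
rewrite -/L mulrBr; nra.
Qed.

Lemma powR_exprn (q r : R) (n : nat) : 0 <= q -> (q `^ r) ^+ n = q `^ (r * n%:R).
Proof. by move=> q0; rewrite -powR_mulrn ?powR_ge0 // -powRrM. Qed.

Lemma rate_rescale (k t : R) : 0 < k -> 0 <= t ->
  k `^ (1 / 3) * t `^ (2 / 3) = k * ((t / k) `^ (1 / 3)) ^+ 2.
Proof.
move=> k0 t0; have q0 : 0 <= t / k by rewrite divr_ge0 // ltW.
set q := t / k; have -> : t = k * q by rewrite /q; field; rewrite gt_eqF.
rewrite powRM ?(ltW k0) // mulrA -powRD; last by apply/implyP => _; rewrite gt_eqF.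
rewrite powR_exprn // (_ : 1 / 3 * 2%:R = 2 / 3); last by field.
rewrite (_ : 1 / 3 + 2 / 3 = 1); last by field.
by rewrite powRr1 // ltW.
Qed.

Lemma cube_root_scale (K T : nat) : (0 < K)%N -> (K <= T)%N ->
  exists2 z : R, 1 <= z &
    T%:R = K%:R * z ^+ 3 /\ K%:R `^ (1 / 3) * T%:R `^ (2 / 3) = K%:R * z ^+ 2.
Proof.
move=> K0 KT; have Kp : 0 < (K%:R : R) by rewrite ltr0n.
have q1 : 1 <= T%:R / K%:R :> R by rewrite ler_pdivlMr // mul1r ler_nat.
have q0 := le_trans ler01 q1.
exists ((T%:R / K%:R) `^ (1 / 3)).
  by rewrite -[X in X <= _](powRr0 (T%:R / K%:R)); apply: ler_powR => //; lra.
split; last by rewrite rate_rescale // ler0n.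
rewrite powR_exprn // (_ : 1 / 3 * 3%:R = 1); last by field.
by rewrite powRr1 //; field; rewrite gt_eqF.
Qed.

Definition bump_instance K (eps : R) (j : 'I_K) : instance K :=
  [ffun i => bern (th_bump j eps i)].

Definition sure_instance K (k : 'I_K) : instance K := [ffun i => bern (th_sure k i)].

Definition hard_dist K (eps : R) : instance_dist K :=
  [seq (1 / (2 * K%:R), bump_instance eps j) | j <- enum 'I_K] ++
  [seq (1 / (2 * K%:R), sure_instance k) | k <- enum 'I_K].

Lemma is_instance_dist_hard K eps : (0 < K)%N -> 0 <= eps <= 1 / 2 ->
  is_instance_dist (hard_dist K eps).
Proof.
move=> K0 /andP [e0 e1]; have Kp : 0 < (K%:R : R) by rewrite ltr0n.
split; last first.
  rewrite big_cat !big_map -!enumT !big_enum /= !sumr_const card_ord -mulr_natr.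
  by field; rewrite gt_eqF.
move=> wn; rewrite mem_cat => /orP [] /mapP [x _ ->] /=;
  (split; first by rewrite divr_ge0 //; lra); move=> i; rewrite ffunE; apply: is_rdist_bern.
  by rewrite /th_bump; case: ifP => _; apply/andP; split; lra.
by rewrite /th_sure; case: ifP => _; apply/andP; split; lra.
Qed.

Lemma bigmax_attained K (f : 'I_K -> R) (M : R) (i0 : 'I_K) :
  0 <= M -> (forall i, f i <= M) -> f i0 = M -> \big[Num.max/0]_(i < K) f i = M.
Proof.
move=> M0 fM fi0; apply/eqP; rewrite eq_le; apply/andP; split.
  by elim/big_ind: _ => // x y hx hy; rewrite ge_max hx hy.
by rewrite (bigD1 i0) //= le_max fi0 lexx.
Qed.

Lemma exp_regret_ext K (pol : policy K) (nu nu' : 'I_K -> rdist) mus n h :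
  nu =1 nu' -> exp_regret_from pol nu mus n h = exp_regret_from pol nu' mus n h.
Proof.
move=> e; elim: n h => [|n IH] h //=.
apply: eq_bigr => d _; rewrite e; congr (_ * (_ + _)).
by apply: eq_bigr => pv _; rewrite IH.
Qed.

Section HardDistribution.
Variables (K : nat) (pol : policy K) (s : {perm 'I_K}) (T : nat).

Lemma exp_regret_order_bump eps (j : 'I_K) : 0 <= eps ->
  exp_regret_order pol (bump_instance eps j) s T =
  exp_regret_from pol (fun i => bern (th_bump ((s^-1)%g j) eps i)) (1 / 2 + eps) T [::].
Proof.
move=> e0; rewrite /exp_regret_order.
have -> : best_mean (bump_instance eps j) = 1 / 2 + eps.
  apply: (bigmax_attained (i0 := j)); first lra.
    by move=> i; rewrite ffunE rmean_bern /th_bump; case: ifP => _; lra.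
  by rewrite ffunE rmean_bern /th_bump eqxx.
by apply: exp_regret_ext => i; rewrite ffunE /th_bump (canF_eq (permK s)).
Qed.

Lemma exp_regret_order_sure (k : 'I_K) :
  exp_regret_order pol (sure_instance k) s T =
  exp_regret_from pol (fun i => bern (th_sure ((s^-1)%g k) i)) 1 T [::].
Proof.
rewrite /exp_regret_order.
have -> : best_mean (sure_instance k) = 1.
  apply: (bigmax_attained (i0 := k)); first lra.
    by move=> i; rewrite ffunE rmean_bern /th_sure; case: ifP => _; lra.
  by rewrite ffunE rmean_bern /th_sure eqxx.
by apply: exp_regret_ext => i; rewrite ffunE /th_sure (canF_eq (permK s)).
Qed.

Lemma regret_fixed_order_hard eps : 0 <= eps ->
  regret_fixed_order pol (hard_dist K eps) s T =
  1 / (2 * K%:R) *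
   (\sum_(j < K) exp_regret_from pol (fun i => bern (th_bump j eps i)) (1 / 2 + eps) T [::] +
    \sum_(k < K) exp_regret_from pol (fun i => bern (th_sure k i)) 1 T [::]).
Proof.
move=> e0; rewrite /regret_fixed_order big_cat !big_map -!enumT !big_enum /=.
rewrite -!mulr_sumr -mulrDr; congr (_ * (_ + _)).
  rewrite [RHS](reindex_inj (@perm_inj _ (s^-1)%g)) /=.
  by apply: eq_bigr => j _; rewrite exp_regret_order_bump.
rewrite [RHS](reindex_inj (@perm_inj _ (s^-1)%g)) /=.
by apply: eq_bigr => k _; rewrite exp_regret_order_sure.
Qed.

End HardDistribution.

Lemma regret_random_orderE K (pol : policy K) (D : instance_dist K) T :
  regret_random_order pol D T =
  #|{perm 'I_K}|%:R^-1 * \sum_(s : {perm 'I_K}) regret_fixed_order pol D s T.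
Proof.
rewrite /regret_random_order /regret_fixed_order exchange_big mulr_sumr /=.
by apply: eq_bigr => wn _; rewrite mulrCA mulr_sumr.
Qed.

Lemma mean_ge (I : finType) (F : I -> R) (B : R) :
  (0 < #|I|)%N -> (forall i, B <= F i) -> B <= #|I|%:R^-1 * \sum_i F i.
Proof.
move=> I0 BF; have n0 : 0 < (#|I|%:R : R) by rewrite ltr0n.
rewrite -(ler_pM2l n0) mulrA mulfV ?gt_eqF // mul1r mulr_natl -sumr_const.
exact: ler_sum.
Qed.

Lemma regret_fixed_order_hard_ge K T (pol : policy K) (z : R) (s : {perm 'I_K}) :
  (20 <= K)%N -> streaming_alg (K %/ 20) pol -> 1 <= z -> T%:R = K%:R * z ^+ 3 ->
  1 / 256 * (K%:R * z ^+ 2) <= regret_fixed_order pol (hard_dist K (1 / (8 * z))) s T.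
Proof.
move=> K20 pol_alg z1 eT.
set H := (K %/ 2)%N.
have K1 : (1 < K)%N by apply: leq_trans K20.
have HK : (H <= K)%N by rewrite leq_div.
have K20r : 20 <= (K%:R : R) by rewrite (ler_nat R 20 K).
have Hr : 2 * H%:R <= (K%:R : R) <= 2 * H%:R + 1.
  have /andP [h1 h2] : (H * 2 <= K <= H * 2 + 1)%N by apply/andP; split; lia.
  rewrite -(ler_nat R) natrM in h1; rewrite -(ler_nat R) natrD natrM in h2; lra.
have mr : 20 * ((K %/ 20).+1%:R - 1) <= (K%:R : R).
  have : (K %/ 20 * 20 <= K)%N by lia.
  by rewrite -(ler_nat R) natrM -natr1; lra.
have eps_bound : 0 < 1 / (8 * z) <= 1 / 8.
  by apply/andP; split; rewrite ?divr_gt0 ?ler_pdivrMr ?mulr_gt0 //; lra.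
have LT : 0 < z ^+ 2 <= T%:R.
  have z2 : 0 < z ^+ 2 by rewrite exprn_gt0 //; lra.
  have z23 : z ^+ 2 <= z ^+ 3 by rewrite [z ^+ 3]exprSr; apply: ler_peMr => //; exact: ltW.
  by rewrite z2 eT /=; nra.
have T0 : (0 < T)%N by rewrite -(ltr0n R); case/andP: LT => /lt_le_trans; apply.
have bump := sum_regret_bump_ge pol_alg K1 T0 HK eps_bound LT.
have sure := sum_regret_sure_ge pol_alg T HK.
have s0 : 0 <= expect_hist pol th_half (nbefore H) T [::].
  apply: (expect_hist_ge0 (streaming_alg_ge0 pol_alg) (@th_half01 K)) => h.
  exact: nrounds_ge0.
have := regret_tradeoff K20r Hr mr z1 s0.
rewrite eT in bump; rewrite natrB // in sure.
rewrite regret_fixed_order_hard; last by case/andP: eps_bound => /ltW.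
have K0 : 0 < (K%:R : R) by lra.
move=> tradeoff; set SB := \sum_(j < K) _ in bump *; set SS := \sum_(k < K) _ in sure *.
apply: le_trans (_ : 1 / (2 * K%:R) * (K%:R ^+ 2 * z ^+ 2 / 128) <= _).
  by rewrite le_eqVlt; apply/orP; left; apply/eqP; field; rewrite gt_eqF.
by apply: ler_wpM2l; [rewrite divr_ge0 //; lra | lra].
Qed.

Theorem theorem3p1 :
  exists C : R, 0 < C /\
  forall K T : nat, (20 <= K)%N -> (K <= T)%N ->
  exists D : instance_dist K, is_instance_dist D /\
    (forall pol : policy K, streaming_alg (K %/ 20) pol ->
       exists s : {perm 'I_K},
         C * (K%:R `^ (1 / 3)) * (T%:R `^ (2 / 3)) <= regret_fixed_order pol D s T) /\
    (forall pol : policy K, streaming_alg (K %/ 20) pol ->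
       C * (K%:R `^ (1 / 3)) * (T%:R `^ (2 / 3)) <= regret_random_order pol D T).
Proof.
exists (1 / 256); split; first lra.
move=> K T K20 KT; have K0 : (0 < K)%N by apply: leq_trans K20.
have [z z1 [eT rate]] := cube_root_scale K0 KT.
exists (hard_dist K (1 / (8 * z))); split.
  apply: is_instance_dist_hard => //.
  by apply/andP; split; rewrite ?divr_ge0 ?ler_pdivrMr ?mulr_gt0 //; lra.
rewrite -mulrA rate; split=> pol pol_alg.
  by exists 1%g; apply: regret_fixed_order_hard_ge.
rewrite regret_random_orderE; apply: mean_ge => [|s].
  by apply/card_gt0P; exists 1%g.
exact: regret_fixed_order_hard_ge.
Qed.
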